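(* Let $A,B,C$ be rings (not necessarily with unit) and $f:A\to B$, $g:B\to C$ ring homomorphisms. If $gf$ is a near isomorphism and $f$ is surjective, then both $f$ and $g$ are near isomorphisms.
   Context: A surjective ring morphism $h:X\to Y$ between (not necessarily unital) rings is a near isomorphism if $X\ker(h)=\ker(h)X=0$. *)

(* Non-unital (associative) rings are not in MathComp
   (all ring structures there are unital), so we define them here. *)
From mathcomp Require Import all_boot all_algebra.
Set Implicit Arguments. Unset Strict Implicit. Unset Printing Implicit Defensive.
Import GRing.Theory.
Local Open Scope ring_scope.

Record nuRing := NuRing {
  nur_sort :> zmodType;
  nur_mul : nur_sort -> nur_sort -> nur_sort;
  nur_mulA : associative nur_mul;
  nur_mulDl : left_distributive nur_mul +%R;
  nur_mulDr : right_distributive nur_mul +%R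
}.

Definition nu_hom (X Y : nuRing) (h : X -> Y) : Prop :=
  (forall x y : X, h (x + y) = h x + h y) /\
  (forall x y : X, h (nur_mul x y) = nur_mul (h x) (h y)).

(* Near isomorphism: a surjective ring morphism h with X ker(h) = ker(h) X = 0,
   i.e. every product x*k and k*x with h k = 0 vanishes. *)
Definition near_iso (X Y : nuRing) (h : X -> Y) : Prop :=
  nu_hom h /\
  (forall y : Y, exists x : X, h x = y) /\
  (forall x k : X, h k = 0 -> nur_mul x k = 0 /\ nur_mul k x = 0).

(* The kernel of f lies in the kernel of g f, so it is annihilated by A.  For the
   kernel of g, lift k in ker g and x in B along the surjective f: the lift of k
   lies in ker (g f), so both products of lifts vanish, and f maps them to x k
   and k x. *)
From mathcomp Require Import all_boot all_algebra.
Local Open Scope ring_scope.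
Import GRing.Theory.

Lemma nu_hom0 (X Y : nuRing) (h : X -> Y) : nu_hom h -> h 0 = 0.
Proof.
move=> [hD _]; apply: (@addrI _ (h 0)).
by rewrite -hD !addr0.
Qed.

Lemma near_iso_comp_surj_l (A B C : nuRing) (f : A -> B) (g : B -> C) :
  nu_hom f -> nu_hom g -> near_iso (g \o f) ->
  (forall b : B, exists a : A, f a = b) -> near_iso f.
Proof.
move=> hf hg [_ [_ ker_gf]] sf; split=> //; split=> // x k fk0.
by apply: ker_gf; rewrite /= fk0 nu_hom0.
Qed.

Lemma surj_comp_r (A B C : Type) (f : A -> B) (g : B -> C) :
  (forall c : C, exists a : A, g (f a) = c) -> forall c : C, exists b : B, g b = c.
Proof. by move=> sgf c; have [a <-] := sgf c; exists (f a). Qed.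

Lemma near_iso_comp_surj_r (A B C : nuRing) (f : A -> B) (g : B -> C) :
  nu_hom f -> nu_hom g -> near_iso (g \o f) ->
  (forall b : B, exists a : A, f a = b) -> near_iso g.
Proof.
move=> hf hg [_ [sgf ker_gf]] sf; split=> //; split.
  exact: (@surj_comp_r _ _ _ f g sgf).
move=> x k; have [a <-] := sf k; have [a' <-] := sf x => gk0.
have [a'a0 aa'0] := ker_gf a' a gk0.
by case: (hf) => _ fM; rewrite -!fM a'a0 aa'0 nu_hom0.
Qed.

Theorem lemma4p4 (A B C : nuRing) (f : A -> B) (g : B -> C) :
  nu_hom f -> nu_hom g ->
  near_iso (g \o f) ->
  (forall b : B, exists a : A, f a = b) ->
  near_iso f /\ near_iso g.
Proof.
move=> hf hg hgf sf; split.
- exact: near_iso_comp_surj_l hgf sf.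
- exact: near_iso_comp_surj_r hgf sf.
Qed.
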